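(* Let $(X,\perp,R)$ be a monadic orthoframe. Then for every $A\subseteq X$: (1) $R[A]^\perp$ is closed under $R$, i.e. $R[R[A]^\perp]=R[A]^\perp$; (2) $R[A]^{\perp\perp}$ is closed under $R$, i.e. $R[R[A]^{\perp\perp}]=R[A]^{\perp\perp}$; (3) $R[A^{\perp\perp}]\subseteq R[A]^{\perp\perp}$.
   Context: An orthoframe $(X,\perp)$ is a set with an irreflexive symmetric binary relation $\perp$; for $A\subseteq X$, $A^\perp=\{x\in X: a\perp x\text{ for all }a\in A\}$. For a binary relation $R$ on $X$ and $A\subseteq X$, $R[A]=\{y: x\,R\,y\text{ for some }x\in A\}$. A monadic orthoframe is $(X,\perp,R)$ with (M1) $\perp$ an orthogonality relation; (M2) $R$ reflexive and transitive; (M3) for each $x\in X$, $R[R[\{x\}]^\perp]\subseteq R[\{x\}]^\perp$. *)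

Definition set_incl {X : Type} (A B : X -> Prop) : Prop := forall x, A x -> B x.
Definition set_eq {X : Type} (A B : X -> Prop) : Prop := set_incl A B /\ set_incl B A.

Definition orthogonality {X : Type} (perp : X -> X -> Prop) : Prop :=
  (forall x, ~ perp x x) /\ (forall x y, perp x y -> perp y x).

Definition orth {X : Type} (perp : X -> X -> Prop) (A : X -> Prop) : X -> Prop :=
  fun x => forall a, A a -> perp a x.

Definition img {X : Type} (R : X -> X -> Prop) (A : X -> Prop) : X -> Prop :=
  fun y => exists x, A x /\ R x y.

Definition singleton {X : Type} (x : X) : X -> Prop := fun y => y = x.

Definition monadic_orthoframe {X : Type} (perp R : X -> X -> Prop) : Prop :=
  orthogonality perp /\
  (forall x, R x x) /\ (forall x y z, R x y -> R y z -> R x z) /\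
  (forall x, set_incl (img R (orth perp (img R (singleton x))))
                      (orth perp (img R (singleton x)))).


(* The key fact is that the orthocomplement of an R-closed set is R-closed:
   if B is R-closed and z is in B, then R[{z}] is contained in B, so
   B^perp is contained in R[{z}]^perp, and (M3) at z pushes R[B^perp] into
   R[{z}]^perp, which is orthogonal to z because R is reflexive.  Since R[A]
   is R-closed by transitivity, (1) and (2) follow by applying this once and
   twice; (3) follows from (2) and the monotonicity of the double
   orthocomplement applied to A ⊆ R[A]. *)

Definition R_closed {X : Type} (R : X -> X -> Prop) (B : X -> Prop) : Prop :=
  set_incl (img R B) B.

Section Orthoframe.

Variables (X : Type) (perp R : X -> X -> Prop).

Lemma set_incl_trans (A B C : X -> Prop) :
  set_incl A B -> set_incl B C -> set_incl A C.
Proof. intros HAB HBC x Hx; apply HBC, HAB, Hx. Qed.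

Lemma img_incl (A B : X -> Prop) : set_incl A B -> set_incl (img R A) (img R B).
Proof. intros HAB y [x [Hx Hxy]]; exists x; split; [apply HAB |]; assumption. Qed.

Lemma orth_incl (A B : X -> Prop) :
  set_incl A B -> set_incl (orth perp B) (orth perp A).
Proof. intros HAB x Hx a Ha; apply Hx, HAB, Ha. Qed.

Lemma orth_orth_incl (A B : X -> Prop) :
  set_incl A B -> set_incl (orth perp (orth perp A)) (orth perp (orth perp B)).
Proof. intros HAB; apply orth_incl, orth_incl, HAB. Qed.

Hypothesis R_refl : forall x, R x x.

Lemma incl_img (A : X -> Prop) : set_incl A (img R A).
Proof. intros x Hx; exists x; split; [exact Hx | apply R_refl]. Qed.

Lemma img_eq_of_R_closed (B : X -> Prop) : R_closed R B -> set_eq (img R B) B.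
Proof. intros HB; split; [exact HB | apply incl_img]. Qed.

Lemma img_singleton_incl (B : X -> Prop) (z : X) :
  R_closed R B -> B z -> set_incl (img R (singleton z)) B.
Proof.
  intros HB Hz; apply (set_incl_trans _ (img R B)); [| exact HB].
  apply img_incl; intros y ->; exact Hz.
Qed.

Hypothesis R_frame : forall x, R_closed R (orth perp (img R (singleton x))).

Lemma R_closed_orth (B : X -> Prop) : R_closed R B -> R_closed R (orth perp B).
Proof.
  intros HB y Hy z Hz.
  assert (HBz : set_incl (orth perp B) (orth perp (img R (singleton z)))).
  { apply orth_incl, img_singleton_incl; assumption. }
  apply (R_frame z y); [exact (img_incl _ _ HBz y Hy) |].
  exists z; split; [reflexivity | apply R_refl].
Qed.

Hypothesis R_trans : forall x y z, R x y -> R y z -> R x z.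

Lemma R_closed_img (A : X -> Prop) : R_closed R (img R A).
Proof.
  intros z [y [[x [Hx Hxy]] Hyz]].
  exists x; split; [exact Hx | exact (R_trans _ _ _ Hxy Hyz)].
Qed.

End Orthoframe.

Theorem mainTheorem17 (X : Type) (perp R : X -> X -> Prop)
  (H : monadic_orthoframe perp R) (A : X -> Prop) :
  set_eq (img R (orth perp (img R A))) (orth perp (img R A)) /\
  set_eq (img R (orth perp (orth perp (img R A)))) (orth perp (orth perp (img R A))) /\
  set_incl (img R (orth perp (orth perp A))) (orth perp (orth perp (img R A))).
Proof.
  destruct H as [_ [R_refl [R_trans R_frame]]].
  assert (closed1 : R_closed R (orth perp (img R A))).
  { apply R_closed_orth, R_closed_img; assumption. }
  assert (closed2 : R_closed R (orth perp (orth perp (img R A)))).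
  { apply R_closed_orth; assumption. }
  split; [| split].
  - apply img_eq_of_R_closed; assumption.
  - apply img_eq_of_R_closed; assumption.
  - apply (set_incl_trans _ _ (img R (orth perp (orth perp (img R A))))); [| exact closed2].
    apply img_incl, orth_orth_incl, incl_img; assumption.
Qed.
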